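(* Let $\mathcal C$ be a concept hierarchy, $r_1,r_2,\epsilon\in[0,1]$, $a>0$ a real with $r_1\le ar_2(1-\epsilon)$, $m$ a positive integer, and let $\mathcal A_2$ and $\mathcal L$ be the networks defined below (with $\mathcal L$ having fixed sets $F$ and $E$ satisfying the stated constraints). Then $\mathcal L$ $implements_2$ $\mathcal A_2$: for every $B\subseteq C_0$, in the executions of $\mathcal A_2$ and $\mathcal L$ on input $B$, for every concept $c$, if $rep(c)$ does not fire at time $level(c)$ in $\mathcal A_2$, then no neuron in $reps(c)$ fires at time $level(c)$ in $\mathcal L$.
   Context: Concept hierarchies: fix positive integers $\ell_{max},n,k$. A universal set $D$ of concepts is partitioned into disjoint sets $D_0,\dots,D_{\ell_{max}}$ with $|D_0|=n$; $level(c)=\ell$ for $c\in D_\ell$. A concept hierarchy $\mathcal C$ consists of $C\subseteq D$, with $C_\ell=C\cap D_\ell$, and for each $c\in C_\ell$ with $1\le\ell\le\ell_{max}$ a set $children(c)\subseteq C_{\ell-1}$, such that $|C_{\ell_{max}}|=k$, $|children(c)|=k$ for all such $c$, and $children(c)\cap children(c')=\emptyset$ for distinct $c,c'\in C_\ell$. Common network dynamics: neurons partitioned into layers $N_0,\dots,N_{\ell_{max}}$; threshold $\tau$; weights $w(u,v)\in\{0,1\}$ for $u\in N_{\ell-1}$, $v\in N_\ell$. Failed neurons never fire. A non-failed neuron $v\in N_\ell$, $\ell\ge1$, does not fire at time 0 and fires at time $t\ge1$ iff $\sum_{u\in N_{\ell-1}}w(u,v)x_u(t-1)\ge\tau$,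 where $x_u(s)\in\{0,1\}$ indicates whether $u$ fires at time $s$. $\mathcal A_2$: no failures; each $c\in D_0$ has $rep(c)\in N_0$, each $c\in C$ with $level(c)\ge1$ has $rep(c)\in N_{level(c)}$, all distinct; $w(u,v)=1$ iff $v=rep(c)$, $u=rep(c')$ for a child $c'$ of $c$, else $0$; $\tau=r_1k$. Input $B\subseteq C_0$: the layer-0 neurons $rep(b)$, $b\in B$, fire at time 0, no other layer-0 neuron fires at time 0, and no layer-0 neuron fires at any other time. $\mathcal L$: each $c\in D_0$ has a set $reps(c)$ of $m$ neurons in $N_0$, each $c\in C$ with $level(c)\ge1$ a set $reps(c)$ of $m$ neurons in $N_{level(c)}$, all pairwise disjoint. $E$ is a set of pairs $(u,v)$ with $v\in reps(c)$ and $u\in reps(c')$ for some child $c'$ of $c$; $w(u,v)=1$ iff $(u,v)\in E$, else $0$. Threshold $\tau=ar_2km(1-\epsilon)$. A fixed set $F$ of neurons is failed. Constraints: for every concept $c$, at least $m(1-\epsilon)$ neurons of $reps(c)$ are not in $F$; and for every $c$ with $level(c)\ge1$, every $v\in reps(c)$ and every child $c'$ of $c$, there are at least $am(1-\epsilon)$ neurons $u\in reps(c')\setminus F$ with $(u,v)\in E$. Input $B\subseteq C_0$: a layer-0 neuron fires at time 0 iff it is in $\bigcup_{b\in B}reps(b)\setminus F$, and no layer-0 neuron fires at any other time. *)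

From HB Require Import structures.
From mathcomp Require Import all_boot all_order all_algebra.
From mathcomp Require Import reals.
Set Implicit Arguments. Unset Strict Implicit. Unset Printing Implicit Defensive.
Import Order.TTheory GRing.Theory Num.Theory.
Local Open Scope ring_scope.

(* The universal set D of concepts is a finite type; [level c] is the index
   of the block D_l of the partition containing c (with level c <= lmax and
   |D_0| = n imposed as hypotheses of the theorem). *)
Definition concept_hierarchy (D : finType) (lmax k : nat) (level : D -> nat)
    (C : {set D}) (children : D -> {set D}) : Prop :=
  [/\ #|[set c in C | level c == lmax]| = k,
      (forall c, c \in C -> (1 <= level c)%N ->
         children c \subset [set c' in C | level c' == (level c).-1]),
      (forall c, c \in C -> (1 <= level c)%N -> #|children c| = k) &
      (forall c c', c \in C -> c' \in C -> (1 <= level c)%N ->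
         level c = level c' -> c != c' -> [disjoint children c & children c'])].

Definition has_rep (D : finType) (level : D -> nat) (C : {set D}) (c : D) : bool :=
  (level c == 0%N) || (c \in C).

(* Layer-0 neurons never fire at times >= 1. *)
Definition net_step (R : realType) (N : finType) (layer : N -> nat)
    (w : N -> N -> R) (tau : R) (F : {set N}) (x : N -> bool) : N -> bool :=
  fun v => [&& (0 < layer v)%N, v \notin F &
            tau <= \sum_(u : N | layer u == (layer v).-1) w u v * (x u)%:R].

Fixpoint fires (R : realType) (N : finType) (layer : N -> nat)
    (w : N -> N -> R) (tau : R) (F : {set N}) (x0 : N -> bool) (t : nat)
    : N -> bool :=
  match t with
  | 0 => fun v => (layer v == 0%N) && x0 v
  | t'.+1 => net_step layer w tau F (fires layer w tau F x0 t')
  end.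

Definition A2_weight (R : realType) (D N : finType) (level : D -> nat)
    (C : {set D}) (children : D -> {set D}) (rep : D -> N) (u v : N) : R :=
  ([exists c, exists c', [&& c \in C, (1 <= level c)%N, c' \in children c,
                            v == rep c & u == rep c']])%:R.

Definition A2_input (D N : finType) (rep : D -> N) (B : {set D}) (v : N) : bool :=
  [exists b in B, v == rep b].

Definition L_weight (R : realType) (N : finType) (E : rel N) (u v : N) : R :=
  (E u v)%:R.

Definition L_input (D N : finType) (reps : D -> {set N}) (F : {set N})
    (B : {set D}) (v : N) : bool :=
  [exists b in B, v \in reps b] && (v \notin F).

From HB Require Import structures.
From mathcomp Require Import all_boot all_order all_algebra.
From mathcomp Require Import reals ring.
Set Implicit Arguments. Unset Strict Implicit. Unset Printing Implicit Defensive.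
Import Order.TTheory GRing.Theory Num.Theory.
Local Open Scope ring_scope.

(* Contrapositive, by induction on the level: if a neuron of reps c fires
   at time level c in L, then rep c fires in A_2.  A neuron of reps c only
   receives input along E, i.e. from reps of children of c, and by induction
   only from children whose rep fires in A_2.  With s such children at most
   s * m of its inputs fire, so reaching the threshold tau_L of L forces
   s * m >= tau_L >= tau_A * m, hence s >= tau_A and rep c fires. *)

Lemma card_bigcup_le (I T : finType) (S : {set I}) (A : I -> {set T}) :
  (#|\bigcup_(i in S) A i| <= \sum_(i in S) #|A i|)%N.
Proof.
apply: (big_ind2 (fun (X : {set T}) n => #|X| <= n)%N) => [|X n Y p Xn Yp|//].
  by rewrite cards0.
by rewrite (leq_trans (leq_card_setU X Y).1) ?leq_add.
Qed.

Lemma card_bigcup_const_le (I T : finType) (S : {set I}) (A : I -> {set T}) m :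
  {in S, forall i, #|A i| = m} -> (#|\bigcup_(i in S) A i| <= #|S| * m)%N.
Proof.
by move=> Am; rewrite -sum_nat_const -(eq_bigr _ Am) card_bigcup_le.
Qed.

Lemma net_step_indicator (R : realType) (N : finType) (layer : N -> nat)
    (e : rel N) (tau : R) (F : {set N}) (x : N -> bool) (v : N) :
  net_step layer (fun u v => (e u v)%:R) tau F x v =
  [&& (0 < layer v)%N, v \notin F &
      tau <= #|[set u | (layer u == (layer v).-1) && e u v && x u]|%:R].
Proof.
rewrite /net_step -sum1dep_card natr_sum big_mkcond [in RHS]big_mkcond /=.
congr [&& _, _ & tau <= _]; apply: eq_bigr => u _.
by case: (_ == _); case: (e u v); case: (x u); rewrite ?mulr0 ?mulr1.
Qed.

Section Implementation.

Variables (R : realType) (D : finType) (level : D -> nat).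
Variables (C : {set D}) (children : D -> {set D}).
Hypothesis children_sub : forall c, c \in C -> (1 <= level c)%N ->
  children c \subset [set c' in C | level c' == (level c).-1].

Local Notation has_rep := (has_rep level C).

Lemma has_rep_C c : c \in C -> has_rep c.
Proof. by rewrite /has_rep => ->; rewrite orbT. Qed.

Lemma has_rep_level_gt0 c : (0 < level c)%N -> has_rep c -> c \in C.
Proof. by rewrite /has_rep lt0n => /negbTE->. Qed.

Lemma child_in_C_level c c' : c \in C -> (1 <= level c)%N -> c' \in children c ->
  c' \in C /\ level c' = (level c).-1.
Proof.
move=> cC lc /(subsetP (children_sub cC lc)); rewrite inE.
by case/andP=> c'C /eqP.
Qed.

Variables (N2 : finType) (layer2 : N2 -> nat) (rep : D -> N2).
Hypothesis rep_layer : forall c, has_rep c -> layer2 (rep c) = level c.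
Hypothesis rep_inj : {in has_rep &, injective rep}.

Lemma A2_stepE (tau : R) (x : N2 -> bool) c : c \in C -> (1 <= level c)%N ->
  net_step layer2 (A2_weight R level C children rep) tau set0 x (rep c) =
  (tau <= #|[set c' in children c | x (rep c')]|%:R).
Proof.
move=> cC lc; rewrite net_step_indicator rep_layer ?has_rep_C // lc in_set0 /=.
have childC c' : c' \in children c -> has_rep c'.
  by case/(child_in_C_level cC lc) => /has_rep_C.
suff -> : [set u | (layer2 u == (level c).-1)
                   && [exists c0, exists c', [&& c0 \in C, (1 <= level c0)%N,
                        c' \in children c0, rep c == rep c0 & u == rep c']]
                   && x u] = rep @: [set c' in children c | x (rep c')].
  by rewrite card_in_imset // => c1 c2; rewrite !inE => /andP[/childC ? _]
     /andP[/childC ? _]; apply: rep_inj.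
apply/setP => u; rewrite inE; apply/idP/imsetP => [|[c' + ->]].
  case/andP=> /andP[_ /existsP[c0 /existsP[c' /and5P[c0C _ c'c0 /eqP rcc0]]]].
  move=> /eqP-> xc'; have c0c : c0 = c.
    exact: rep_inj (has_rep_C c0C) (has_rep_C cC) (esym rcc0).
  by exists c'; rewrite // inE -c0c c'c0.
rewrite inE => /andP[c'c ->]; have [c'C lc'] := child_in_C_level cC lc c'c.
rewrite rep_layer ?has_rep_C // lc' eqxx andbT /=.
by apply/existsP; exists c; apply/existsP; exists c'; rewrite cC lc c'c !eqxx.
Qed.

Variables (NL : finType) (layerL : NL -> nat) (reps : D -> {set NL}).
Variables (m : nat) (E : rel NL) (F : {set NL}).
Hypothesis reps_card : forall c, has_rep c -> #|reps c| = m.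
Hypothesis reps_disj : forall c c', has_rep c -> has_rep c' -> c != c' ->
  [disjoint reps c & reps c'].
Hypothesis E_ok : forall u v, E u v -> exists c c',
  [/\ c \in C, (1 <= level c)%N, c' \in children c, v \in reps c & u \in reps c'].

Lemma reps_inj c c' v :
  has_rep c -> has_rep c' -> v \in reps c -> v \in reps c' -> c = c'.
Proof.
move=> hc hc' vc vc'; apply/eqP/negPn/negP => /(reps_disj hc hc').
by move/disjointFr/(_ vc); rewrite vc'.
Qed.

Lemma L_step_threshold_le (tau : R) (x : NL -> bool) c v :
  has_rep c -> v \in reps c -> net_step layerL (L_weight R E) tau F x v ->
  tau <= #|[set u in \bigcup_(c' in children c) reps c' | x u]|%:R.
Proof.
move=> hc vc; rewrite net_step_indicator => /and3P[_ _ /le_trans]; apply.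
rewrite ler_nat subset_leq_card //; apply/subsetP => u; rewrite !inE.
case/andP=> /andP[_ /E_ok[c0 [c' [c0C _ c'c0 vc0 uc']]]] ->; rewrite andbT.
have c0c : c0 = c by exact: reps_inj (has_rep_C c0C) hc vc0 vc.
by apply/bigcupP; exists c'; rewrite -?c0c.
Qed.

Variables (B : {set D}) (tauA tauL : R).
Hypothesis B_sub : B \subset C.
Hypothesis m_gt0 : (0 < m)%N.
Hypothesis tau_scaled : tauA * m%:R <= tauL.

Local Notation fireA :=
  (fires layer2 (A2_weight R level C children rep) tauA set0 (A2_input rep B)).
Local Notation fireL := (fires layerL (L_weight R E) tauL F (L_input reps F B)).

Lemma L_fires_A2_0 c v : has_rep c -> level c = 0%N -> v \in reps c ->
  fireL 0 v -> fireA 0 (rep c).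
Proof.
move=> hc lc vc /and3P[_ /existsP[b /andP[bB vb]] _].
have bc : b = c by exact: reps_inj (has_rep_C (subsetP B_sub b bB)) hc vb vc.
by rewrite /= rep_layer // lc; apply/existsP; exists b; rewrite bB bc eqxx.
Qed.

Lemma L_fires_A2_S t c v :
    (forall c' v', has_rep c' -> level c' = t -> v' \in reps c' ->
       fireL t v' -> fireA t (rep c')) ->
  has_rep c -> level c = t.+1 -> v \in reps c ->
  fireL t.+1 v -> fireA t.+1 (rep c).
Proof.
move=> IH hc lc vc /(L_step_threshold_le hc vc) fireLv.
have lc1 : (1 <= level c)%N by rewrite lc.
have cC := has_rep_level_gt0 lc1 hc.
set S := [set c' in children c | fireA t (rep c')].
have inputs_sub : [set u in \bigcup_(c' in children c) reps c' | fireL t u]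
    \subset \bigcup_(c' in S) reps c'.
  apply/subsetP => u; rewrite inE => /andP[/bigcupP[c' c'c uc'] xu].
  have [c'C lc'] := child_in_C_level cC lc1 c'c.
  apply/bigcupP; exists c' => //; rewrite inE c'c.
  by apply: IH uc' xu; rewrite ?has_rep_C // lc' lc.
have card_inputs : (#|\bigcup_(c' in S) reps c'| <= #|S| * m)%N.
  apply: card_bigcup_const_le => c'; rewrite inE => /andP[c'c _].
  by have [/has_rep_C /reps_card] := child_in_C_level cC lc1 c'c.
have m_pos : (0 : R) < m%:R by rewrite ltr0n.
rewrite /= A2_stepE // -(ler_pM2r m_pos) (le_trans tau_scaled) //.
rewrite (le_trans fireLv) // -natrM ler_nat.
exact: leq_trans (subset_leq_card inputs_sub) card_inputs.
Qed.

Lemma L_fires_A2 t c v : has_rep c -> level c = t -> v \in reps c ->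
  fireL t v -> fireA t (rep c).
Proof.
elim: t c v => [|t IH] c v; first exact: L_fires_A2_0.
exact: L_fires_A2_S.
Qed.

End Implementation.

Theorem theorem8p3
  (R : realType)
  (* concept hierarchy *)
  (lmax n k : nat) (lmax_pos : (0 < lmax)%N) (n_pos : (0 < n)%N) (k_pos : (0 < k)%N)
  (D : finType) (level : D -> nat)
  (level_le : forall c, (level c <= lmax)%N)
  (card_D0 : #|[set c | level c == 0%N]| = n)
  (C : {set D}) (children : D -> {set D})
  (hC : concept_hierarchy lmax k level C children)
  (* parameters *)
  (r1 r2 eps a : R)
  (r1_01 : 0 <= r1 <= 1) (r2_01 : 0 <= r2 <= 1) (eps_01 : 0 <= eps <= 1)
  (a_pos : 0 < a) (hr1 : r1 <= a * r2 * (1 - eps))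
  (m : nat) (m_pos : (0 < m)%N)
  (* network A_2 *)
  (N2 : finType) (layer2 : N2 -> nat) (layer2_le : forall v, (layer2 v <= lmax)%N)
  (rep : D -> N2)
  (rep_layer : forall c, has_rep level C c -> layer2 (rep c) = level c)
  (rep_inj : forall c c', has_rep level C c -> has_rep level C c' ->
               rep c = rep c' -> c = c')
  (* network L *)
  (NL : finType) (layerL : NL -> nat) (layerL_le : forall v, (layerL v <= lmax)%N)
  (reps : D -> {set NL})
  (reps_card : forall c, has_rep level C c -> #|reps c| = m)
  (reps_layer : forall c v, has_rep level C c -> v \in reps c -> layerL v = level c)
  (reps_disj : forall c c', has_rep level C c -> has_rep level C c' -> c != c' ->
               [disjoint reps c & reps c'])
  (E : rel NL)
  (E_ok : forall u v, E u v -> exists c c', [/\ c \in C, (1 <= level c)%N,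
             c' \in children c, v \in reps c & u \in reps c'])
  (F : {set NL})
  (F_reps : forall c, has_rep level C c -> m%:R * (1 - eps) <= #|reps c :\: F|%:R)
  (F_edges : forall c v c', c \in C -> (1 <= level c)%N -> v \in reps c ->
               c' \in children c ->
               a * m%:R * (1 - eps) <= #|[set u in reps c' :\: F | E u v]|%:R) :
  forall B : {set D}, B \subset [set c in C | level c == 0%N] ->
  forall c : D, has_rep level C c ->
    ~~ fires layer2 (A2_weight R level C children rep) (r1 * k%:R) set0
         (A2_input rep B) (level c) (rep c) ->
    forall v, v \in reps c ->
      ~~ fires layerL (L_weight R E) (a * r2 * k%:R * m%:R * (1 - eps)) F
           (L_input reps F B) (level c) v.
Proof.
move=> B B_C0 c hc nA v vc; apply: contraNN nA; have [_ children_sub _ _] := hC.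
have B_C : B \subset C.
  by apply/subsetP => b /(subsetP B_C0); rewrite inE => /andP[].
have thresholds : r1 * k%:R * m%:R <= a * r2 * k%:R * m%:R * (1 - eps).
  have -> : a * r2 * k%:R * m%:R * (1 - eps) = a * r2 * (1 - eps) * (k%:R * m%:R).
    by ring.
  by rewrite -mulrA ler_wpM2r ?mulr_ge0.
exact: (L_fires_A2 (layerL := layerL) (F := F) children_sub rep_layer rep_inj
  reps_card reps_disj E_ok B_C m_pos thresholds hc erefl vc).
Qed.
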